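(* Let $G$ be a connected graph of order $n\geq 2$ and let $H$ be a graph with $k\geq 1$ connected components $H_1,\dots,H_k$. Then $$\max\{\chi_L(H_t+K_1)\mid 1\leq t\leq k\}\ \leq\ \chi_L(G\odot H)\ \leq\ \chi_L(G)+\sum_{t=1}^{k}\bigl(\chi_L(H_t+K_1)-1\bigr).$$
   Context: All graphs are finite and simple. A $k$-coloring of a connected graph $G$ is a map $c:V(G)\to\{1,\dots,k\}$ with $c(u)\neq c(v)$ for adjacent $u,v$; it induces the partition $\Pi=\{C_1,\dots,C_k\}$ into color classes $C_i=c^{-1}(i)$. The color code of $v$ is $c_\Pi(v)=(d(v,C_1),\dots,d(v,C_k))$ with $d(v,C_i)=\min\{d(v,x): x\in C_i\}$ (graph distance). $c$ is a locating coloring if distinct vertices have distinct color codes; the locating-chromatic number $\chi_L(G)$ is the least $k$ for which a locating $k$-coloring exists. The corona product $G\odot H$ of a graph $G$ with vertex set $\{a_1,\dots,a_n\}$ and a graph $H$ is obtained from one copy of $G$ and $n$ disjoint copies of $H$ by joining $a_i$ to every vertex of the $i$-th copy of $H$. For a graph $F$, $F+K_1$ denotes the join of $F$ with a single new vertex adjacent to all vertices of $F$. *)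

From mathcomp Require Import all_boot.
Set Implicit Arguments. Unset Strict Implicit. Unset Printing Implicit Defensive.

(* A simple graph is a relation e on a finType, assumed symmetric and
   irreflexive in the theorem. *)

Section Graphs.
Variable T : finType.
Variable e : rel T.

Fixpoint walk_le (n : nat) (u v : T) : bool :=
  if n is n'.+1 then (u == v) || [exists w, e u w && walk_le n' w v]
  else u == v.

(* graph distance: least n with a walk of length <= n (= #|T| if unreachable,
   which never happens in a connected graph) *)
Definition dist (u v : T) : nat := find (fun n => walk_le n u v) (iota 0 #|T|).

Definition connected : Prop := forall u v : T, connect e u v.

(* a k-coloring: proper and onto (color classes form a partition into k classes) *)
Definition proper_coloring k (c : {ffun T -> 'I_k}) : bool :=
  [forall u, forall v, e u v ==> (c u != c v)] && [forall i, exists v, c v == i].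

Definition dist_class k (c : {ffun T -> 'I_k}) (v : T) (i : 'I_k) : nat :=
  \big[minn/#|T|]_(x | c x == i) dist v x.

Definition color_code k (c : {ffun T -> 'I_k}) (v : T) : {ffun 'I_k -> nat} :=
  [ffun i => dist_class c v i].

Definition locating_coloring k (c : {ffun T -> 'I_k}) : bool :=
  proper_coloring c &&
  [forall u, forall v, (color_code c u == color_code c v) ==> (u == v)].

(* locating-chromatic number: least k admitting a locating k-coloring
   (k = #|T| always works via an injective coloring) *)
Definition chiL : nat :=
  find (fun k => [exists c : {ffun T -> 'I_k}, locating_coloring c])
       (iota 0 #|T|.+1).

End Graphs.

(* corona product G ⊙ H : vertices inl a (copy of G) and inr (a, x) (the copy
   of H attached to a) *)
Definition corona (T U : finType) (e : rel T) (f : rel U) : rel (T + (T * U)) :=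
  fun p q =>
    match p, q with
    | inl a, inl b => e a b
    | inr (a, x), inr (b, y) => (a == b) && f x y
    | inl a, inr (b, _) => a == b
    | inr (a, _), inl b => a == b
    end.

Definition comps (U : finType) (f : rel U) : {set {set U}} :=
  [set [set y | connect f x y] | x : U].

(* H[C] + K_1 : induced subgraph on C joined with a new vertex None *)
Definition joinK1 (U : finType) (f : rel U) (C : {set U})
  : rel (option {y : U | y \in C}) :=
  fun p q =>
    match p, q with
    | None, None => false
    | None, Some _ => true
    | Some _, None => true
    | Some x, Some y => f (val x) (val y)
    end.
Arguments joinK1 {U} f C _ _.

From mathcomp Require Import all_boot.
Set Implicit Arguments. Unset Strict Implicit. Unset Printing Implicit Defensive.

(* In a connected graph the colour code of v is determined by the predicates
   "some vertex of colour i lies within distance n of v", and these are carried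
   along maps sending edges to edges or loops.
   Lower bound: fix a vertex a of G and a component H_t; in G ⊙ H any two
   vertices of the copy of H_t at a are at distance at most 2, and a walk
   leaving that copy passes through a.  Hence a locating colouring of G ⊙ H,
   restricted to the copy of H_t together with a as apex, is a locating
   colouring of H_t + K_1.
   Upper bound: colour G by a locating colouring and each vertex of a copy of
   H_t by its colour in a locating colouring of H_t + K_1, tagged with t. *)

Section Walks.
Variables (T : finType) (e : rel T).

Lemma walk_le_refl n u : walk_le e n u u.
Proof. by case: n => [|n] /=; rewrite eqxx. Qed.

Lemma walk_le_mono n m u v : n <= m -> walk_le e n u v -> walk_le e m u v.
Proof.
elim: n m u => [|n IH] [|m] u //=; first by move=> _ ->.
rewrite ltnS => le_nm /orP[->//|/existsP[w /andP[uw wv]]].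
by apply/orP; right; apply/existsP; exists w; rewrite uw (IH _ _ le_nm wv).
Qed.

Lemma walk_le_step n u w v : e u w -> walk_le e n w v -> walk_le e n.+1 u v.
Proof. by move=> uw wv /=; apply/orP; right; apply/existsP; exists w; rewrite uw. Qed.

Lemma walk_le_edge u v : e u v -> walk_le e 1 u v.
Proof. by move=> uv; apply: (walk_le_step uv); rewrite walk_le_refl. Qed.

Lemma walk_le1 u v : walk_le e 1 u v = (u == v) || e u v.
Proof.
apply/idP/orP => [|[/eqP->|/walk_le_edge//]]; last exact: walk_le_refl.
by case/orP=> [->|/existsP[w /andP[uw /eqP <-]]]; [left|right].
Qed.

Lemma walk_leSP n u v :
  walk_le e n.+1 u v -> u = v \/ exists2 w, e u w & walk_le e n w v.
Proof. by case/orP=> [/eqP->|/existsP[w /andP[uw wv]]]; [left|right; exists w]. Qed.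

Lemma walk_le_cat n m u w v :
  walk_le e n u w -> walk_le e m w v -> walk_le e (n + m) u v.
Proof.
elim: n u => [|n IH] u; first by move=> /eqP->.
case/walk_leSP=> [-> wv|[x ux xw] wv]; first by apply: walk_le_mono wv; rewrite leq_addl.
by rewrite addSn; apply: walk_le_step ux (IH _ xw wv).
Qed.

Lemma path_walk_le u p : path e u p -> walk_le e (size p) u (last u p).
Proof.
elim: p u => [|w p IH] u /=; first by rewrite eqxx.
by case/andP=> uw pw; apply: walk_le_step uw (IH _ pw).
Qed.

Lemma walk_le_connect n u v : walk_le e n u v -> connect e u v.
Proof.
elim: n u => [|n IH] u; first by move=> /eqP->.
case/walk_leSP=> [->|[w uw /IH wv]]; first exact: connect0.
exact: connect_trans (connect1 uw) wv.
Qed.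

Lemma connect_walk_le u v : connect e u v -> exists n, walk_le e n u v.
Proof. by case/connectP=> p pp ->; exists (size p); exact: path_walk_le. Qed.

Lemma dist_le_card u v : dist e u v <= #|T|.
Proof.
by have := find_size (fun n => walk_le e n u v) (iota 0 #|T|); rewrite size_iota.
Qed.

Lemma dist_le n u v : walk_le e n u v -> dist e u v <= n.
Proof.
move=> uv; have [lt_nT|le_Tn] := ltnP n #|T|; last exact: leq_trans (dist_le_card u v) _.
rewrite leqNgt; apply/negP => /(before_find 0).
by rewrite nth_iota // add0n uv.
Qed.

(* A shortest path has no repeated vertex, hence length below [#|T|]. *)
Lemma dist_lt_card n u v : walk_le e n u v -> dist e u v < #|T|.
Proof.
move/walk_le_connect/connectP=> [p pp ->].
have [p' pp' uniq_p' _] := shortenP pp.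
apply: leq_ltn_trans (dist_le (path_walk_le pp')) _.
by have := max_card (mem (u :: p')); rewrite (card_uniqP uniq_p').
Qed.

Lemma walk_le_dist n u v : walk_le e n u v -> walk_le e (dist e u v) u v.
Proof.
move/dist_lt_card=> lt_dT.
have: has (fun n => walk_le e n u v) (iota 0 #|T|) by rewrite has_find size_iota.
by move/(nth_find 0); rewrite nth_iota // add0n.
Qed.

End Walks.

Lemma walk_le_map (T1 T2 : finType) (e1 : rel T1) (e2 : rel T2) (p : T1 -> T2) n u v :
  (forall x y, e1 x y -> p x = p y \/ e2 (p x) (p y)) ->
  walk_le e1 n u v -> walk_le e2 n (p u) (p v).
Proof.
move=> hp; elim: n u => [|n IH] u; first by move=> /eqP->; rewrite walk_le_refl.
case/walk_leSP=> [->|[w uw /IH wv]]; first exact: walk_le_refl.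
case: (hp _ _ uw) => [->|e2w]; [exact: walk_le_mono wv | exact: walk_le_step e2w wv].
Qed.

(* In a connected graph these predicates determine the colour codes, and
   unlike distances they are easily transported along graph maps. *)
Definition color_within (T : finType) (e : rel T) (Col : eqType) (c : T -> Col) n v i :=
  [exists x, (c x == i) && walk_le e n v x].

Section ColorWithin.
Variables (T : finType) (e : rel T).

Lemma color_within0 (Col : eqType) (c : T -> Col) v i :
  color_within e c 0 v i = (c v == i).
Proof.
apply/existsP/idP => [[x /andP[cx /eqP->//]]|cv].
by exists v; rewrite cv /= eqxx.
Qed.

Lemma eq_color_within (Col Col' : eqType) (c : T -> Col) (c' : T -> Col') i i' n v :
  (forall x, (c x == i) = (c' x == i')) ->
  color_within e c n v i = color_within e c' n v i'.
Proof. by move=> eq_c; apply: eq_existsb => x; rewrite eq_c. Qed.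

Lemma dist_class_le_dist k (c : {ffun T -> 'I_k}) v i x :
  c x == i -> dist_class e c v i <= dist e v x.
Proof.
move=> cx; rewrite /dist_class.
elim: (index_enum T) (mem_index_enum x) => [|y s IH] //; rewrite inE big_cons.
case/orP=> [/eqP<-|xs]; first by rewrite cx geq_minl.
by case: (c y == i); rewrite ?geq_min IH ?orbT.
Qed.

Lemma dist_class_le_inv k (c : {ffun T -> 'I_k}) v i n : dist_class e c v i <= n ->
  #|T| <= n \/ exists2 x, c x == i & dist e v x <= n.
Proof.
rewrite /dist_class; elim/big_ind: _ => [|a b IHa IHb|x cx]; [by left| |by right; exists x].
by rewrite geq_min => /orP[/IHa|/IHb].
Qed.

Lemma proper_coloring_edge k (c : {ffun T -> 'I_k}) u v :
  proper_coloring e c -> e u v -> c u != c v.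
Proof. by case/andP=> /forallP/(_ u)/forallP/(_ v)/implyP. Qed.

Lemma proper_coloring_onto k (c : {ffun T -> 'I_k}) i :
  proper_coloring e c -> exists x, c x == i.
Proof. by case/andP=> _ /forallP/(_ i)/existsP. Qed.

Hypothesis connected_e : connected e.

Lemma dist_class_le_within k (c : {ffun T -> 'I_k}) v i n : (exists x, c x == i) ->
  (dist_class e c v i <= n) = color_within e c n v i.
Proof.
move=> [x0 cx0]; apply/idP/idP; last first.
  by case/existsP=> x /andP[cx /dist_le vx]; exact: leq_trans (dist_class_le_dist v cx) vx.
case/dist_class_le_inv=> [le_Tn|[x cx le_dn]].
  have [m vx0] := connect_walk_le (connected_e v x0).
  apply/existsP; exists x0; rewrite cx0 /=.
  exact: walk_le_mono (leq_trans (dist_le_card _ _ _) le_Tn) (walk_le_dist vx0).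
have [m vx] := connect_walk_le (connected_e v x).
by apply/existsP; exists x; rewrite cx /=; exact: walk_le_mono le_dn (walk_le_dist vx).
Qed.

Lemma color_code_eq_within k (c : {ffun T -> 'I_k}) u v : proper_coloring e c ->
  color_code e c u = color_code e c v <->
  forall n i, color_within e c n u i = color_within e c n v i.
Proof.
move=> pc; split=> [eq_uv n i|eq_uv].
  move/ffunP/(_ i): eq_uv; rewrite !ffunE => eq_i.
  by rewrite -!dist_class_le_within ?eq_i //; exact: proper_coloring_onto.
apply/ffunP => i; rewrite !ffunE; have used_i := proper_coloring_onto i pc.
apply/eqP; rewrite eqn_leq; apply/andP; split.
  by rewrite dist_class_le_within // eq_uv -dist_class_le_within.
by rewrite dist_class_le_within // -eq_uv -dist_class_le_within.
Qed.

Lemma locating_coloring_within_inj k (c : {ffun T -> 'I_k}) u v :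
  locating_coloring e c ->
  (forall n i, color_within e c n u i = color_within e c n v i) -> u = v.
Proof.
case/andP=> pc /forallP/(_ u)/forallP/(_ v)/implyP loc_uv eq_uv; apply/eqP/loc_uv.
exact/eqP/(color_code_eq_within _ _ pc).
Qed.

End ColorWithin.

Section LocatingChromaticNumber.
Variables (T : finType) (e : rel T).

Lemma chiL_le_card : chiL e <= #|T|.+1.
Proof.
have := find_size (fun k => [exists c : {ffun T -> 'I_k}, locating_coloring e c]) (iota 0 #|T|.+1).
by rewrite size_iota.
Qed.

Lemma chiL_min k (c : {ffun T -> 'I_k}) : locating_coloring e c -> chiL e <= k.
Proof.
move=> lc; have /andP[pc _] := lc.
have le_kT : k <= #|T|.
  apply: (@leq_trans #|codom c|); last by rewrite -(size_codom c) card_size.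
  rewrite -{1}(card_ord k); apply: subset_leq_card.
  by apply/subsetP => i _; have [x /eqP <-] := proper_coloring_onto i pc; exact: codom_f.
rewrite leqNgt; apply/negP => /(before_find 0); rewrite nth_iota ?ltnS // add0n.
by move/negbT/negP; apply; apply/existsP; exists c.
Qed.

Hypotheses (irreflexive_e : irreflexive e) (connected_e : connected e).

(* Colouring every vertex differently is locating, so the search defining
   [chiL] succeeds. *)
Lemma exists_locating_chiL : exists c : {ffun T -> 'I_(chiL e)}, locating_coloring e c.
Proof.
pose p k := [exists c : {ffun T -> 'I_k}, locating_coloring e c].
suff p_T : has p (iota 0 #|T|.+1).
  have := nth_find 0 p_T; rewrite nth_iota; last by move: p_T; rewrite has_find size_iota.
  by rewrite add0n => /existsP.
apply/hasP; exists #|T|; first by rewrite mem_iota add0n ltnSn.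
set c : {ffun T -> 'I_#|T|} := [ffun x => enum_rank x].
have pc : proper_coloring e c.
  apply/andP; split; apply/forallP=> u; last first.
    by apply/existsP; exists (enum_val u); rewrite ffunE enum_valK.
  apply/forallP=> v; apply/implyP=> uv; rewrite !ffunE.
  by apply: contraTneq uv => /enum_rank_inj->; rewrite irreflexive_e.
apply/existsP; exists c; rewrite /locating_coloring pc; apply/forallP=> u; apply/forallP=> v.
apply/implyP=> /eqP/(color_code_eq_within connected_e _ _ pc)/(_ 0 (c u)).
by rewrite !color_within0 eqxx !ffunE => /esym/eqP/enum_rank_inj->.
Qed.

Lemma chiL_le_card_image (Col : finType) (c : T -> Col) (x0 : T) :
  (forall u v, e u v -> c u != c v) ->
  (forall u v, (forall n i, color_within e c n u i = color_within e c n v i) -> u = v) ->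
  chiL e <= #|[set c x | x in T]|.
Proof.
move=> proper_c separates_c; set S := [set c x | x in T].
have cS x : c x \in S by exact: imset_f.
pose c' := [ffun x => enum_rank_in (cS x0) (c x)].
have c'E x i : i \in S -> (c' x == enum_rank_in (cS x0) i) = (c x == i).
  move=> iS; rewrite ffunE; apply/eqP/eqP => [|->//].
  by move/(congr1 enum_val); rewrite !enum_rankK_in.
have pc' : proper_coloring e c'.
  apply/andP; split; apply/forallP=> u.
    apply/forallP=> v; apply/implyP=> /proper_c; apply: contra.
    by rewrite [c' v]ffunE c'E.
  have /imsetP[x _ ux] := enum_valP u.
  by apply/existsP; exists x; rewrite ffunE -ux enum_valK_in.
apply: (@chiL_min _ c'); rewrite /locating_coloring pc'.
apply/forallP=> u; apply/forallP=> v; apply/implyP=> /eqP.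
move/(color_code_eq_within connected_e _ _ pc') => eq_uv; apply/eqP/separates_c => n i.
have [iS|iNS] := boolP (i \in S).
  by rewrite !(@eq_color_within _ _ _ _ c c' i (enum_rank_in (cS x0) i)) // => x; rewrite c'E.
suff no_i w : color_within e c n w i = false by rewrite !no_i.
by apply/existsP=> -[x /andP[/eqP cx _]]; rewrite -cx cS in iNS.
Qed.

End LocatingChromaticNumber.

Section Corona.
Variables (T U : finType) (e : rel T) (f : rel U).
Notation V := (T + T * U)%type.
Notation corona := (corona e f).

Definition corona_base (v : V) : T := match v with inl a => a | inr (a, _) => a end.

Lemma walk_le_corona_inl n a b : walk_le corona n (inl a) (inl b) = walk_le e n a b.
Proof.
apply/idP/idP; last by apply: walk_le_map => x y; right.
apply: (walk_le_map (p := corona_base)).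
by move=> [x|[x x']] [y|[y y']] //=; [right | move/eqP->; left.. | case/andP=> /eqP-> _; left].
Qed.

Lemma walk_le_corona_exit (P : pred U) n a x v :
  (forall y z, f y z -> P y -> P z) -> P x -> (forall y, P y -> v != inr (a, y)) ->
  walk_le corona n (inr (a, x)) v -> exists2 m, n = m.+1 & walk_le corona m (inl a) v.
Proof.
move=> closed_P + v_out; elim: n x => [|n IH] x Px.
  by move=> /eqP xv; have := v_out _ Px; rewrite -xv eqxx.
case/walk_leSP=> [xv|[w xw wv]]; first by have := v_out _ Px; rewrite -xv eqxx.
exists n => //; case: w xw wv => [b /= /eqP<- //|[b y] /= /andP[/eqP<- xy]].
by case/(IH _ (closed_P _ _ xy Px)) => m -> wv; exact: walk_le_mono (leqnSn m) wv.
Qed.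

Lemma color_within_corona_exit (Col : eqType) (c : V -> Col) (P : pred U) n a x i :
  (forall y z, f y z -> P y -> P z) -> P x -> (forall y, P y -> c (inr (a, y)) != i) ->
  color_within corona c n (inr (a, x)) i = (0 < n) && color_within corona c n.-1 (inl a) i.
Proof.
move=> closed_P Px fiber_not_i; apply/existsP/idP => [[z /andP[cz xz]]|].
  have z_out y : P y -> z != inr (a, y).
    by move=> Py; apply: contra (fiber_not_i _ Py) => /eqP<-.
  have [m -> az] := walk_le_corona_exit closed_P Px z_out xz.
  by apply/existsP; exists z; rewrite cz az.
case: n => // n /existsP[z /andP[cz az]]; exists z; rewrite cz.
by apply: walk_le_step az; rewrite /= eqxx.
Qed.

Lemma corona_connected : connected e -> connected corona.
Proof.
move=> connected_e u v.
have [m base_uv] := connect_walk_le (connected_e (corona_base u) (corona_base v)).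
have to_base w : walk_le corona 1 w (inl (corona_base w)).
  by case: w => [a|[a x]]; [exact: walk_le_refl | apply: walk_le_edge; rewrite /= eqxx].
have from_base w : walk_le corona 1 (inl (corona_base w)) w.
  by case: w => [a|[a x]]; [exact: walk_le_refl | apply: walk_le_edge; rewrite /= eqxx].
apply: (walk_le_connect (n := 1 + m + 1)); apply: walk_le_cat (from_base v).
by apply: walk_le_cat (to_base u) _; rewrite walk_le_corona_inl.
Qed.

Lemma irreflexive_corona : irreflexive e -> irreflexive f -> irreflexive corona.
Proof. by move=> irr_e irr_f [a|[a x]] /=; rewrite ?irr_e // eqxx irr_f. Qed.

End Corona.

Section JoinK1.
Variables (U : finType) (f : rel U) (C : {set U}).
Notation join := (joinK1 f C).

Lemma walk_le_joinK1_2 u w : walk_le join 2 u w.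
Proof.
have apex_edge s : join None (Some s) by [].
case: u => [s|]; last first.
  by case: w => [t|]; [exact: walk_le_mono (walk_le_edge (apex_edge t)) | exact: walk_le_refl].
apply: (@walk_le_step _ _ _ _ None) => //.
by case: w => [t|]; [exact: walk_le_edge | exact: walk_le_refl].
Qed.

Lemma joinK1_connected : connected join.
Proof. by move=> u w; exact: walk_le_connect (walk_le_joinK1_2 u w). Qed.

Lemma irreflexive_joinK1 : irreflexive f -> irreflexive join.
Proof. by move=> irr_f [s|] //=; exact: irr_f. Qed.

End JoinK1.

Section CoronaFiber.
Variables (T U : finType) (e : rel T) (f : rel U) (a : T) (C : {set U}).
Hypothesis closed_C : forall y z, f y z -> y \in C -> z \in C.
Notation V := (T + T * U)%type.
Notation corona := (corona e f).
Notation join := (joinK1 f C).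

Definition fiber_emb (w : option {y | y \in C}) : V :=
  if w is Some s then inr (a, val s) else inl a.

Lemma corona_fiber_emb_edge w1 w2 : join w1 w2 -> corona (fiber_emb w1) (fiber_emb w2).
Proof. by case: w1 w2 => [s1|] [s2|] //= h; rewrite eqxx. Qed.

(* Within one step of a fiber vertex there are only apex and fiber vertices,
   and from two steps on every colour of the join is reached. *)
Lemma color_within_fiber (Col : eqType) (c : V -> Col) n (s : {y | y \in C}) i :
  (exists w, c (fiber_emb w) == i) ->
  color_within corona c n (inr (a, val s)) i = color_within join (c \o fiber_emb) n (Some s) i.
Proof.
move=> [w cw]; apply/idP/idP; last first.
  case/existsP=> z /andP[cz sz]; apply/existsP; exists (fiber_emb z); rewrite cz /=.
  by apply: (walk_le_map (p := fiber_emb) _ sz) => x y /corona_fiber_emb_edge; right.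
case/existsP=> z /andP[cz sz].
have at_s : z = inr (a, val s) -> color_within join (c \o fiber_emb) n (Some s) i.
  by move=> zs; apply/existsP; exists (Some s); rewrite /= -zs cz walk_le_refl.
case: n sz at_s => [|[|n]] sz at_s.
- by apply/at_s/eqP; rewrite eq_sym.
- rewrite walk_le1 in sz; case/orP: sz => [/eqP sz|]; first exact: at_s (esym sz).
  case: z cz {at_s} => [b|[b y]] cz /=.
    by move=> /eqP ab; apply/existsP; exists None; rewrite walk_le_edge // andbT /= ab.
  case/andP=> /eqP ab sy; have yC := closed_C sy (valP s).
  apply/existsP; exists (Some (exist _ y yC)).
  by rewrite walk_le_edge // andbT /= ab.
- apply/existsP; exists w; rewrite cw.
  by apply: (@walk_le_mono _ _ 2); last exact: walk_le_joinK1_2.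
Qed.

Variables (K : nat) (c : {ffun V -> 'I_K}).
Hypotheses (connected_e : connected e) (locating_c : locating_coloring corona c).

Lemma chiL_joinK1_le_locating : chiL join <= K.
Proof.
have /andP[pc _] := locating_c.
set c' := c \o fiber_emb.
have apex_color (s : {y | y \in C}) : c' (Some s) != c' None.
  exact: proper_coloring_edge pc (corona_fiber_emb_edge (w1 := Some s) (w2 := None) erefl).
apply: (leq_trans (@chiL_le_card_image _ _ (@joinK1_connected _ f C) _ c' None _ _)).
- by move=> u v uv; exact: proper_coloring_edge pc (corona_fiber_emb_edge uv).
- move=> [s|] [t|] eq_st; last by [].
  + suff [/val_inj->] : inr (a, val s) = inr (a, val t) :> V by [].
    apply: (locating_coloring_within_inj (corona_connected f connected_e) locating_c) => n i.
    have [used_i|unused_i] := boolP [exists w, c' w == i].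
      by rewrite !color_within_fiber ?eq_st //; exact/existsP.
    have fiber_not_i y : y \in C -> c (inr (a, y)) != i.
      by move=> yC; apply: contra unused_i => ci; apply/existsP; exists (Some (exist _ y yC)).
    have exit_fiber := color_within_corona_exit e n closed_C _ fiber_not_i.
    by rewrite !exit_fiber ?(valP s) ?(valP t).
  + by have := eq_st 0 (c' None); rewrite !color_within0 eqxx (negbTE (apex_color s)).
  + by have := eq_st 0 (c' None); rewrite !color_within0 eqxx (negbTE (apex_color t)).
- by rewrite -[X in _ <= X]card_ord; exact: max_card.
Qed.

End CoronaFiber.

Lemma chiL_joinK1_le_corona (T U : finType) (e : rel T) (f : rel U) (a : T) (C : {set U}) :
  irreflexive e -> irreflexive f -> connected e ->
  (forall y z, f y z -> y \in C -> z \in C) -> chiL (joinK1 f C) <= chiL (corona e f).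
Proof.
move=> irr_e irr_f connected_e closed_C.
have [c locating_c] :=
  exists_locating_chiL (irreflexive_corona irr_e irr_f) (corona_connected f connected_e).
exact: (chiL_joinK1_le_locating a closed_C connected_e locating_c).
Qed.

Lemma card_bigcup_le (I T : finType) (P : pred I) (F : I -> {set T}) :
  #|\bigcup_(i | P i) F i| <= \sum_(i | P i) #|F i|.
Proof.
elim/big_ind2: _ => [|X1 n1 X2 n2 le1 le2|//]; first by rewrite cards0.
exact: leq_trans (leq_card_setU _ _).1 (leq_add le1 le2).
Qed.

Section CoronaUpperBound.
Variables (T U : finType) (e : rel T) (f : rel U).
Hypotheses (symmetric_f : symmetric f) (connected_e : connected e).
Notation V := (T + T * U)%type.
Notation corona := (corona e f).
Notation join C := (joinK1 f C).

Definition component (x : U) : {set U} := [set y | connect f x y].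

Lemma component_refl x : x \in component x.
Proof. by rewrite inE connect0. Qed.

Lemma component_eq x y : y \in component x -> component y = component x.
Proof.
rewrite inE => xy; apply/setP=> z; rewrite !inE; apply/idP/idP; first exact: connect_trans.
by apply: connect_trans; rewrite (sym_connect_sym symmetric_f).
Qed.

Lemma component_closed x y z : f y z -> y \in component x -> z \in component x.
Proof. by rewrite !inE => yz xy; exact: connect_trans xy (connect1 yz). Qed.

Variable c0 : {ffun T -> 'I_(chiL e)}.
Hypothesis locating_c0 : locating_coloring e c0.
Variable cC : forall C : {set U}, {ffun option {y | y \in C} -> 'I_(chiL (join C))}.
Hypothesis locating_cC : forall C, locating_coloring (join C) (cC C).
Let proper_cC C : proper_coloring (join C) (cC C) := proj1 (andP (locating_cC C)).

Definition joinK1_color (C : {set U}) (y : U) : nat :=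
  if insub y is Some s then val (cC C (Some s)) else 0.

Lemma joinK1_colorE (C : {set U}) (s : {y | y \in C}) : joinK1_color C (val s) = cC C (Some s).
Proof. by rewrite /joinK1_color valK. Qed.

(* All the colour sets ['I_(chiL (join C))] embed in one common ['I_M]. *)
Local Notation M := (#|U|.+2).

Lemma chiL_joinK1_le C : chiL (join C) <= M.
Proof.
apply: leq_trans (chiL_le_card _) _; rewrite card_option card_sig !ltnS.
exact: max_card.
Qed.

Lemma joinK1_color_inj C (j1 j2 : 'I_(chiL (join C))) :
  (inord j1 : 'I_M) = inord j2 -> j1 = j2.
Proof.
have lt_M (j : 'I_(chiL (join C))) : j < M := leq_trans (ltn_ord j) (chiL_joinK1_le C).
by move/(congr1 (@nat_of_ord _)); rewrite !inordK // => /val_inj.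
Qed.

Local Notation Col := ('I_(chiL e) + {set U} * 'I_M)%type.

Definition corona_color (v : V) : Col :=
  match v with
  | inl a => inl (c0 a)
  | inr (_, y) => inr (component y, inord (joinK1_color (component y) y))
  end.

Lemma corona_color_fiber (C : {set U}) (s : {y | y \in C}) a :
  component (val s) = C -> corona_color (inr (a, val s)) = inr (C, inord (cC C (Some s))).
Proof. by move=> sC; rewrite /= sC joinK1_colorE. Qed.

Lemma color_within_corona_base n a i :
  color_within corona corona_color n (inl a) (inl i) = color_within e c0 n a i.
Proof.
apply/existsP/existsP => [[[b|[b y]] /andP[cb ab]]|[b /andP[cb ab]]] //.
  by exists b; move: cb => /eqP[->]; rewrite eqxx -(walk_le_corona_inl _ f).
by exists (inl b); rewrite /= (eqP cb) eqxx walk_le_corona_inl.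
Qed.

Lemma color_within_corona_fiber_base n a x i :
  color_within corona corona_color n.+1 (inr (a, x)) (inl i) =
  color_within corona corona_color n (inl a) (inl i).
Proof. by rewrite (@color_within_corona_exit _ _ _ _ _ _ predT). Qed.

Lemma color_within_corona_fiber n a (C : {set U}) (s : {y | y \in C}) j :
  component (val s) = C -> j != cC C None ->
  color_within corona corona_color n (inr (a, val s)) (inr (C, inord j)) =
  color_within (join C) (cC C) n (Some s) j.
Proof.
move=> sC j_not_apex.
have closed_C y z : f y z -> y \in C -> z \in C by rewrite -sC; exact: component_closed.
have colorE w : (corona_color (fiber_emb a w) == inr (C, inord j)) = (cC C w == j).
  case: w => [t|]; last by apply/esym/negbTE; rewrite eq_sym.
  have tC : component (val t) = C.
    by rewrite (@component_eq (val s)) sC ?(valP t).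
  by rewrite (corona_color_fiber a tC); apply/eqP/eqP => [[/joinK1_color_inj]|->].
rewrite color_within_fiber //; first exact: eq_color_within.
have [w /eqP wj] := proper_coloring_onto j (proper_cC C).
by exists w; rewrite colorE wj.
Qed.

Lemma color_within_joinK1_apex n (C : {set U}) (s : {y | y \in C}) :
  color_within (join C) (cC C) n (Some s) (cC C None) = (0 < n).
Proof.
case: n => [|n].
  rewrite color_within0; apply/negbTE.
  exact: proper_coloring_edge (proper_cC C) (_ : join C (Some s) None).
apply/existsP; exists None; rewrite eqxx.
by apply: (@walk_le_mono _ _ 1); last exact: walk_le_edge.
Qed.

Lemma corona_color_separates u v :
  (forall n i, color_within corona corona_color n u i = color_within corona corona_color n v i) ->
  u = v.
Proof.
move=> eq_uv.
have separates_c0 a b : (forall n i, color_within e c0 n a i = color_within e c0 n b i) -> a = b.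
  exact: (locating_coloring_within_inj connected_e locating_c0).
have := eq_uv 0 (corona_color u); rewrite !color_within0 eqxx => /esym/eqP.
case: u v eq_uv => [a|[a x]] [b|[b y]] eq_uv //=.
  by move=> _; congr inl; apply: separates_c0 => n i; rewrite -!color_within_corona_base.
case=> xy _; have eq_ab : a = b.
  apply: separates_c0 => n i; rewrite -!color_within_corona_base.
  by rewrite -(color_within_corona_fiber_base _ _ x) -(color_within_corona_fiber_base _ _ y).
subst b; have yx : y \in component x by rewrite -xy component_refl.
pose sx : {z | z \in component x} := exist _ x (component_refl x).
pose sy : {z | z \in component x} := exist _ y yx.
suff [->] : Some sx = Some sy by [].
apply: (locating_coloring_within_inj (@joinK1_connected _ f _) (locating_cC _)) => n j.
have [->|j_not_apex] := eqVneq j (cC (component x) None).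
  by rewrite !color_within_joinK1_apex.
rewrite -(@color_within_corona_fiber n a _ sx j erefl j_not_apex).
by rewrite -(@color_within_corona_fiber n a _ sy j xy j_not_apex).
Qed.

Lemma card_corona_colors :
  #|[set corona_color v | v : V]| <= chiL e + \sum_(C in comps f) (chiL (join C) - 1).
Proof.
pose fiber_colors C : {set Col} := [set inr (C, inord (val j)) | j in [set~ cC C None]].
have sub : [set corona_color v | v : V] \subset
  [set inl i | i : 'I_(chiL e)] :|: \bigcup_(C in comps f) fiber_colors C.
  apply/subsetP => _ /imsetP[[a|[a x]] _ ->]; rewrite inE; first by apply/orP; left; exact: imset_f.
  apply/orP; right; apply/bigcupP; exists (component x); first exact: imset_f.
  pose sx : {z | z \in component x} := exist _ x (component_refl x).
  rewrite (corona_color_fiber a (s := sx)) //; apply: imset_f.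
  rewrite !inE; exact: proper_coloring_edge (proper_cC _) (_ : join _ (Some sx) None).
apply: leq_trans (subset_leq_card sub) _.
apply: leq_trans (leq_card_setU _ _).1 _; apply: leq_add.
  by apply: leq_trans (leq_imset_card _ _) _; rewrite card_ord.
apply: leq_trans (card_bigcup_le _ _) _; apply: leq_sum => C _.
by apply: leq_trans (leq_imset_card _ _) _; rewrite cardsC1 card_ord subn1.
Qed.

Lemma chiL_corona_le (a0 : T) :
  chiL corona <= chiL e + \sum_(C in comps f) (chiL (join C) - 1).
Proof.
apply: leq_trans card_corona_colors.
apply: (chiL_le_card_image (corona_connected f connected_e) (inl a0) _ corona_color_separates).
case=> [a|[a x]] [b|[b y]] uv //.
  by rewrite /=; apply: contraNneq (proper_coloring_edge (proj1 (andP locating_c0)) uv) => -[->].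
have /andP[/eqP<- xy] := uv; have yx : y \in component x by rewrite inE connect1.
pose sx : {z | z \in component x} := exist _ x (component_refl x).
pose sy : {z | z \in component x} := exist _ y yx.
rewrite (corona_color_fiber a (s := sx)) // (corona_color_fiber a (s := sy)) ?(component_eq yx) //.
have proper_cx := proper_coloring_edge (proper_cC (component x)).
by apply: contraNneq (proper_cx _ _ (xy : join _ (Some sx) (Some sy))) => -[/joinK1_color_inj->].
Qed.

End CoronaUpperBound.

Theorem theorem1 (T U : finType) (e : rel T) (f : rel U) :
  symmetric e -> irreflexive e -> symmetric f -> irreflexive f ->
  connected e -> 2 <= #|T| -> 0 < #|U| ->
  \max_(C in comps f) chiL (joinK1 f C) <= chiL (corona e f) /\
  chiL (corona e f) <= chiL e + \sum_(C in comps f) (chiL (joinK1 f C) - 1).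
Proof.
(* Distances are taken along walks in [e] itself. *)
move=> _ irr_e sym_f irr_f connected_e card_T _.
have [a0 _] : exists a0, a0 \in T by apply/card_gt0P; exact: leq_trans card_T.
split.
  apply/bigmax_leqP => _ /imsetP[x _ ->].
  exact: (chiL_joinK1_le_corona a0 irr_e irr_f connected_e (@component_closed _ f x)).
have [c0 locating_c0] := exists_locating_chiL irr_e connected_e.
have locating_joinK1 C :=
  exists_locating_chiL (irreflexive_joinK1 (C := C) irr_f) (@joinK1_connected _ f C).
exact: (chiL_corona_le sym_f connected_e locating_c0 (fun C => xchooseP (locating_joinK1 C)) a0).
Qed.
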